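(* Under the hypotheses and notation below, fix $\epsilon>0$ and define $$\Gamma_N^{\epsilon}(\mathcal{K}^* )=\{z\in\mathrm{Grid}(N):\ \sigma_{\inf}((\mathcal{K}^*-zI)\mathcal{P}_N^* )<\epsilon\}.$$ Then $\Gamma_N^{\epsilon}(\mathcal{K}^* )\subset\mathrm{Sp}_{\mathrm{ap},\epsilon}(\mathcal{K}^* )$ for every $N\in\mathbb{N}$, and $\Gamma_N^{\epsilon}(\mathcal{K}^* )\to\mathrm{Sp}_{\mathrm{ap},\epsilon}(\mathcal{K}^* )$ in the Attouch–Wets sense as $N\to\infty$.
   Context: $\mathcal{H}$ is a reproducing kernel Hilbert space (RKHS) of complex-valued functions on a set $\mathcal{X}$ with reproducing kernel $\mathfrak{K}$, inner product $\langle\cdot,\cdot\rangle$ and norm $\|\cdot\|$; $\mathfrak{K}_x$ is the kernel function at $x$ ($g(x)=\langle g,\mathfrak{K}_x\rangle$). For $F:\mathcal{X}\to\mathcal{X}$ the Koopman operator $\mathcal{K}g=g\circ F$ has domain $\{g\in\mathcal{H}:g\circ F\in\mathcal{H}\}$ and is closed; assume it is densely defined, and let $\mathcal{K}^*$ be its adjoint (then $\mathcal{K}^*\mathfrak{K}_x=\mathfrak{K}_{F(x)}$). Let $\mathfrak{K}_1,\mathfrak{K}_2,\dots$ be a countable family of kernel functions whose span is a core of $\mathcal{K}^*$, $V_N=\mathrm{span}\{\mathfrak{K}_1,\dots,\mathfrak{K}_N\}$, $\mathcal{P}_N$ the orthogonal projection onto $V_N$ and $\mathcal{P}_N^*$ the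 inclusion of $V_N$ into $\mathcal{H}$. Injection modulus: $\sigma_{\inf}(T)=\inf\{\|Tg\|/\|g\|:0\neq g\in\mathcal{D}(T)\}$. Approximate point $\epsilon$-pseudospectrum: $\mathrm{Sp}_{\mathrm{ap},\epsilon}(T)=\overline{\{z\in\mathbb{C}:\sigma_{\inf}(T-zI)<\epsilon\}}$. $\mathrm{Grid}(N)=\frac1N(\mathbb{Z}+i\mathbb{Z})\cap\{z:|z|\le N\}$. Attouch–Wets convergence of closed sets $C_n\to C$: if $C=\emptyset$, this means that for every $m\in\mathbb{N}$, $C_n\cap B_m(0)=\emptyset$ for all large $n$; if $C\ne\emptyset$, it means $C_n\neq\emptyset$ for large $n$ and $d_{\mathrm{AW}}(C_n,C)\to0$, where $d_{\mathrm{AW}}(X,Y)=\sum_{m\ge1}2^{-m}\min\{1,\sup_{x\in B_m(0)}|\mathrm{dist}(x,X)-\mathrm{dist}(x,Y)|\}$ and $B_m(0)$ is the closed ball of radius $m$ about $0$; equivalently, for every $\delta>0$ and compact $K\subset\mathbb{C}$, eventually $C_n\cap K\subset C+B_\delta(0)$ and $C\cap K\subset C_n+B_\delta(0)$. *)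

From mathcomp Require Import all_boot all_order all_algebra.
From mathcomp Require Import complex.
From mathcomp Require Import boolp classical_sets reals constructive_ereal ereal.
Set Implicit Arguments. Unset Strict Implicit. Unset Printing Implicit Defensive.
Import Order.TTheory GRing.Theory Num.Theory.
Local Open Scope ring_scope.
Local Open Scope classical_set_scope.

Section RKHSDefs.
Variables (R : realType) (X : Type).
Local Notation C := R[i].
Local Notation fn := (X -> C).

Definition fzero : fn := fun _ => 0.
Definition fadd (f g : fn) : fn := fun x => f x + g x.
Definition fscale (a : C) (f : fn) : fn := fun x => a * f x.
Definition fsub (f g : fn) : fn := fun x => f x - g x.

(* (H, ip) is a complex Hilbert space of functions X -> C (inner product
   linear in the first argument, conjugate symmetric, positive definite,
   complete), and it is a reproducing kernel Hilbert space whose kernel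
   function at x is kf x (i.e. kf x = K_x, K(y,x) = kf x y):
   K_x \in H and g x = <g, K_x> for all g \in H. *)
Definition hnorm (ip : fn -> fn -> C) (f : fn) : R := Num.sqrt (@complex.Re R (ip f f)).

Record is_RKHS (H : set fn) (ip : fn -> fn -> C) (kf : X -> fn) : Prop := {
  rk_zero : H fzero;
  rk_add : forall f g, H f -> H g -> H (fadd f g);
  rk_scale : forall a f, H f -> H (fscale a f);
  rk_ipD : forall f g h, H f -> H g -> H h -> ip (fadd f g) h = ip f h + ip g h;
  rk_ipZ : forall a f h, H f -> H h -> ip (fscale a f) h = a * ip f h;
  rk_ipC : forall f g, H f -> H g -> ip g f = Num.conj (ip f g);
  rk_ip_ge0 : forall f, H f -> 0 <= ip f f;
  rk_ip_eq0 : forall f, H f -> ip f f = 0 -> f = fzero;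
  rk_complete : forall u : nat -> fn, (forall n, H (u n)) ->
     (forall e : R, 0 < e -> exists N, forall m n, (N <= m)%N -> (N <= n)%N ->
         hnorm ip (fsub (u m) (u n)) < e) ->
     exists g, H g /\ forall e : R, 0 < e -> exists N, forall n, (N <= n)%N ->
         hnorm ip (fsub (u n) g) < e;
  rk_kernel : forall x, H (kf x);
  rk_reproducing : forall x g, H g -> g x = ip g (kf x) }.

(* Koopman operator K g = g o F, domain {g in H | g o F in H} *)
Definition koopman_dom (H : set fn) (F : X -> X) : set fn :=
  [set g | H g /\ H (g \o F)].

Definition densely_defined (H : set fn) (ip : fn -> fn -> C) (D : set fn) : Prop :=
  forall g, H g -> forall e : R, 0 < e -> exists d, D d /\ hnorm ip (fsub g d) < e.

(* graph of the adjoint K^* : (h, w) is in the graph iff h \in H and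
   <K g, h> = <g, w> for all g in D(K), with w \in H. *)
Definition koopman_adj (H : set fn) (ip : fn -> fn -> C) (F : X -> X)
  (h w : fn) : Prop :=
  [/\ H h, H w & forall g, koopman_dom H F g -> ip (g \o F) h = ip g w].

(* V_N = span {K_{x_0}, ..., K_{x_(N-1)}} (the paper's K_1, ..., K_N) *)
Definition spanN (kf : X -> fn) (xs : nat -> X) (N : nat) : set fn :=
  [set v | exists c : nat -> C, v = fun y => \sum_(j < N) c j * kf (xs j) y].

Definition span_all (kf : X -> fn) (xs : nat -> X) : set fn :=
  [set v | exists N, spanN kf xs N v].

Definition is_core_adj (H : set fn) (ip : fn -> fn -> C) (F : X -> X)
  (S : set fn) : Prop :=
  (forall v, S v -> exists w, koopman_adj H ip F v w) /\
  (forall h w, koopman_adj H ip F h w -> forall e : R, 0 < e ->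
     exists v u, [/\ S v, koopman_adj H ip F v u,
                     hnorm ip (fsub v h) < e & hnorm ip (fsub u w) < e]).

(* injection modulus of (K^* - z I) restricted to a subset S of the domain of K^*:
   inf { ||(K^* - z) v|| / ||v|| : 0 <> v in S }  (inf of empty set = +oo) *)
Definition sigma_inf_on (H : set fn) (ip : fn -> fn -> C) (F : X -> X)
  (S : set fn) (z : C) : \bar R :=
  ereal_inf [set t | exists v w, [/\ S v, v <> fzero, koopman_adj H ip F v w &
     t = (hnorm ip (fsub w (fscale z v)) / hnorm ip v)%:E]].

Definition grid (N : nat) : set C :=
  [set z | exists a b : int, z = (a%:~R + b%:~R * 'i) / N%:R /\ `|z| <= N%:R].

Definition cclosure (S : set C) : set C :=
  [set z | forall d : R, 0 < d -> exists w, S w /\ `|z - w| < (d%:C)%C].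

Definition Sp_ap_adj (H : set fn) (ip : fn -> fn -> C) (F : X -> X) (eps : R)
  : set C :=
  cclosure [set z | (sigma_inf_on H ip F setT z < eps%:E)%E].

Definition Gamma_adj (H : set fn) (ip : fn -> fn -> C) (kf : X -> fn)
  (F : X -> X) (xs : nat -> X) (eps : R) (N : nat) : set C :=
  [set z | grid N z /\ (sigma_inf_on H ip F (spanN kf xs N) z < eps%:E)%E].

End RKHSDefs.

(* Attouch--Wets convergence of sets Cn -> S in C, in the equivalent
   "local Hausdorff" form: for every delta > 0 and every bounded region
   (closed ball B_m(0), m in N), eventually Cn n /\ B_m(0) is within delta of S
   and S /\ B_m(0) is within delta of Cn n.  (Covers the case S = empty.) *)
Definition within_of (R : realType) (d : R) (m : nat) (A B : set R[i]) : Prop :=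
  forall z, A z -> `|z| <= m%:R -> exists w, B w /\ `|z - w| <= (d%:C)%C.

Definition AW_converges (R : realType) (Cn : nat -> set R[i]) (S : set R[i]) : Prop :=
  forall (d : R) (m : nat), 0 < d -> exists N0, forall n, (N0 <= n)%N ->
    within_of d m (Cn n) S /\ within_of d m S (Cn n).

(* Restricting K^* - z to V_N can only raise the injection modulus, so Gamma_N^eps
   lies in the eps-pseudospectrum.  Conversely, a pair (v, K^* v) with
   ||K^* v - z0 v|| < eps ||v|| can be replaced, by the core property, by a pair from
   some V_M for which the strict inequality survives, uniformly for z near z0; hence
   every point of {z | sigma_inf(K^* - z) < eps} is approached by points of Gamma_n for
   large n.  Covering a bounded region by finitely many lattice cells makes the choice
   of n uniform, which is Attouch-Wets convergence. *)

From mathcomp Require Import all_boot all_order all_algebra.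
From mathcomp Require Import complex.
From mathcomp Require Import boolp classical_sets reals constructive_ereal ereal.
From mathcomp Require Import ring lra zify.
Import Order.TTheory GRing.Theory Num.Theory.
Local Open Scope ring_scope.
Local Open Scope classical_set_scope.
Set Implicit Arguments. Unset Strict Implicit.

Lemma exists_nat_gt (R : realType) (x : R) : exists N : nat, x < N%:R.
Proof.
exists (Num.bound `|x|).
exact: le_lt_trans (ler_norm x) (archi_boundP (normr_ge0 x)).
Qed.

Lemma eventually_forall_int_range (Q : int -> nat -> Prop) (L : nat) :
  (forall a, `|a| <= L%:Z -> exists N, forall n, (N <= n)%N -> Q a n) ->
  exists N, forall a, `|a| <= L%:Z -> forall n, (N <= n)%N -> Q a n.
Proof.
elim: L => [|L IH] hQ.
  have [N hN] := hQ 0 ltac:(lia); exists N => a ha n hn.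
  have -> : a = 0 by lia.
  exact: hN.
have [N IHN] : exists N, forall a, `|a| <= L%:Z -> forall n, (N <= n)%N -> Q a n.
  by apply: IH => a ha; apply: hQ; lia.
have [N1 h1] := hQ L.+1%:Z ltac:(lia).
have [N2 h2] := hQ (- L.+1%:Z) ltac:(lia).
exists (maxn N (maxn N1 N2)) => a ha n hn.
have [haL|[->|->]] : `|a| <= L%:Z \/ a = L.+1%:Z \/ a = - L.+1%:Z by lia.
- by apply: IHN => //; lia.
- by apply: h1; lia.
- by apply: h2; lia.
Qed.

Lemma eventually_forall_int_box (P : int -> int -> nat -> Prop) (L : nat) :
  (forall a b, `|a| <= L%:Z -> `|b| <= L%:Z -> exists N, forall n, (N <= n)%N -> P a b n) ->
  exists N, forall a b, `|a| <= L%:Z -> `|b| <= L%:Z -> forall n, (N <= n)%N -> P a b n.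
Proof.
move=> hP; have [N hN] : exists N, forall a, `|a| <= L%:Z -> forall n, (N <= n)%N ->
    forall b, `|b| <= L%:Z -> P a b n.
  apply: eventually_forall_int_range => a ha.
  have [N hN] := eventually_forall_int_range (hP a ^~ ha).
  by exists N => n Nn b hb; exact: hN.
by exists N => a b ha hb n Nn; exact: hN.
Qed.

Lemma perturbation_margin (R : realFieldType) (A nv c e : R) :
  0 <= A -> A < e * nv -> 0 <= c -> 0 < nv ->
  exists eta r : R, [/\ 0 < eta, 0 < r & forall x y s t,
    0 <= x < eta -> 0 <= y < eta -> 0 <= s < r -> nv - x <= t <= nv + x ->
    0 < t /\ A + y + c * x + s * t < e * t].
Proof.
move=> A0 Ae c0 nv0.
have e0 : 0 < e by rewrite -(pmulr_lgt0 _ nv0); lra.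
set dl := e * nv - A; have dl0 : 0 < dl by rewrite subr_gt0.
have k0 : 0 < 4 * (e + 1 + c) by lra.
set eta := Num.min (nv / 2) (dl / (4 * (e + 1 + c))).
have eta0 : 0 < eta by rewrite lt_min !divr_gt0.
have eta_nv : eta <= nv / 2 by rewrite ge_min lexx.
have eta_dl : eta * (4 * (e + 1 + c)) <= dl.
  by rewrite -ler_pdivlMr // ge_min lexx orbT.
set r := dl / (8 * nv).
exists eta, r; split => //; first by rewrite divr_gt0 // mulr_gt0.
move=> x y s t /andP[x0 xe] /andP[y0 ye] /andP[s0 sr] /andP[tl tu].
have t0 : 0 < t by lra.
split => //.
(* the shift error [s * t] costs at most [3 dl / 16], the vector errors at most [dl / 4] *)
have st : s * t <= r * (3 / 2 * nv).
  apply: ler_pM => //; [exact: ltW | exact: ltW | lra].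
have r_nv : r * (3 / 2 * nv) = 3 / 16 * dl by rewrite /r; field; rewrite gt_eqF.
have cx : c * x <= c * eta by rewrite ler_wpM2l // ltW.
have ex : e * x <= e * eta by rewrite ler_wpM2l // ltW.
have et : e * (nv - x) <= e * t by rewrite ler_wpM2l // ltW.
rewrite /dl in eta_dl r_nv; lra.
Qed.

Section ComplexLattice.
Local Open Scope complex_scope.
Variable R : realType.
Implicit Types (z u w : R[i]) (x : R).
Local Notation normc := (@Normc.normc R).

Lemma normr_normc z : `|z| = (normc z)%:C.
Proof. by []. Qed.

Lemma normc_ge0 z : 0 <= normc z.
Proof. by case: z => a b; exact: sqrtr_ge0. Qed.

Lemma normcB_sym z w : normc (z - w) = normc (w - z).
Proof. by rewrite -opprB normcN. Qed.

Lemma normcB_triangle z u w : normc (z - w) <= normc (z - u) + normc (u - w).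
Proof. by rewrite -[z - w](subrKA u); exact: le_normcD. Qed.

Lemma normc_le_ReIm z : normc z <= `|complex.Re z| + `|complex.Im z|.
Proof.
case: z => a b /=.
rewrite -(ger0_norm (addr_ge0 (normr_ge0 a) (normr_ge0 b))) -sqrtr_sqr.
apply: ler_wsqrtr; rewrite sqrrD !real_normK ?num_real //.
have : 0 <= `|a| * `|b| by rewrite mulr_ge0.
lra.
Qed.

Lemma Re_le_normc z : `|complex.Re z| <= normc z.
Proof. by case: z => a b /=; rewrite -sqrtr_sqr ler_wsqrtr // lerDl sqr_ge0. Qed.

Lemma Im_le_normc z : `|complex.Im z| <= normc z.
Proof. by case: z => a b /=; rewrite -sqrtr_sqr ler_wsqrtr // lerDr sqr_ge0. Qed.

Lemma floor_scale_approx (K : nat) x : (0 < K)%N ->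
  `|x - (Num.floor (K%:R * x))%:~R / K%:R| <= K%:R^-1 /\
  `|(Num.floor (K%:R * x))%:~R| <= K%:R * `|x| + 1.
Proof.
move=> K0; have Kp : 0 < K%:R :> R by rewrite ltr0n.
have /andP[fl fu] := floor_itv (K%:R * x); rewrite intrD in fu.
set f := (Num.floor _)%:~R in fl fu *.
split.
  have -> : x - f / K%:R = (K%:R * x - f) / K%:R by field; rewrite gt_eqF.
  rewrite normrM ger0_norm ?subr_ge0 // gtr0_norm ?invr_gt0 //.
  by rewrite ler_piMl ?invr_ge0 ?ltW //; lra.
rewrite -(gtr0_norm Kp) -normrM ler_norml.
have := ler_norm (K%:R * x); have := ler_norm (- (K%:R * x)); rewrite normrN; lra.
Qed.

Lemma lattice_approx (K : nat) z : (0 < K)%N -> exists a b : int,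
  [/\ `|a%:~R| <= K%:R * normc z + 1 :> R, `|b%:~R| <= K%:R * normc z + 1 :> R
    & normc (z - ((a%:~R / K%:R) +i* (b%:~R / K%:R))) <= 2 / K%:R].
Proof.
move=> K0; have Kp : 0 < K%:R :> R by rewrite ltr0n.
have [ea ba] := floor_scale_approx (complex.Re z) K0.
have [eb bb] := floor_scale_approx (complex.Im z) K0.
exists (Num.floor (K%:R * complex.Re z)), (Num.floor (K%:R * complex.Im z)); split.
- apply: le_trans ba _; rewrite lerD2r ler_pM2l //; exact: Re_le_normc.
- apply: le_trans bb _; rewrite lerD2r ler_pM2l //; exact: Im_le_normc.
apply: le_trans (normc_le_ReIm _) _; case: z ea eb {ba bb} => x y /= ea eb.
have : K%:R^-1 + K%:R^-1 = 2 / K%:R :> R by rewrite mulr2n mulrDl mul1r.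
lra.
Qed.

Lemma grid_approx (n : nat) z : (0 < n)%N -> normc z + 2 <= n%:R ->
  exists2 w, grid n w & normc (z - w) <= 2 / n%:R.
Proof.
move=> n0 zn; have np : 0 < n%:R :> R by rewrite ltr0n.
have [a [b [_ _ hab]]] := lattice_approx z n0.
exists ((a%:~R / n%:R) +i* (b%:~R / n%:R)) => //; exists a, b; split.
  have nz : n%:R != 0 :> R[i] by rewrite pnatr_eq0 -lt0n.
  apply: (mulIf nz); rewrite divfK //; apply/eqP.
  rewrite -(rmorph_nat (real_complex R)) -!(rmorph_int (real_complex R)).
  by rewrite eq_complex /=; apply/andP; split; apply/eqP; field; rewrite gt_eqF.
rewrite -(rmorph_nat (real_complex R)) lecR.
have := normcB_triangle 0 z ((a%:~R / n%:R) +i* (b%:~R / n%:R)).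
rewrite !sub0r !normcN.
have : 2 / n%:R <= 2 :> R by rewrite ler_pdivrMr // ler_peMr // ler1n.
lra.
Qed.

End ComplexLattice.

Section InnerProductSpace.
Local Open Scope complex_scope.
Variables (R : realType) (X : Type) (H : set (X -> R[i]))
  (ip : (X -> R[i]) -> (X -> R[i]) -> R[i]) (kf : X -> X -> R[i]).
Hypothesis RK : is_RKHS H ip kf.
Implicit Types (f g h : X -> R[i]).
Local Notation normc := (@Normc.normc R).
Local Notation sqnorm f := (complex.Re (ip f f)).

Lemma ip_selfE f : H f -> ip f f = (sqnorm f)%:C.
Proof.
move=> Hf; have := rk_ip_ge0 RK Hf.
by case: (ip f f) => a b; rewrite lecE => /andP[/eqP/= ->].
Qed.

Lemma sqnorm_ge0 f : H f -> 0 <= sqnorm f.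
Proof. by move=> Hf; have := rk_ip_ge0 RK Hf; rewrite lecE => /andP[]. Qed.

Lemma ipC f g : H f -> H g -> ip g f = (ip f g)^*.
Proof. exact: (rk_ipC RK). Qed.

Lemma ipDr f g h : H f -> H g -> H h -> ip f (fadd g h) = ip f g + ip f h.
Proof.
move=> Hf Hg Hh.
by rewrite (ipC (rk_add RK Hg Hh) Hf) (rk_ipD RK) // rmorphD (ipC Hg Hf) (ipC Hh Hf).
Qed.

Lemma ipZr a f h : H f -> H h -> ip f (fscale a h) = a^* * ip f h.
Proof.
by move=> Hf Hh; rewrite (ipC (rk_scale RK a Hh) Hf) (rk_ipZ RK) // rmorphM (ipC Hh Hf).
Qed.

Lemma sqnorm_add_scale f g (t : R) : H f -> H g ->
  sqnorm (fadd f (fscale t%:C g)) =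
  sqnorm f + 2 * t * complex.Re (ip f g) + t ^+ 2 * sqnorm g.
Proof.
move=> Hf Hg; have Htg := rk_scale RK t%:C Hg; have Hs := rk_add RK Hf Htg.
rewrite (rk_ipD RK) // (rk_ipZ RK) // !ipDr // !ipZr // (ipC Hf Hg).
rewrite (ip_selfE Hf) (ip_selfE Hg); case: (ip f g) => a b /=.
ring.
Qed.

Lemma Re_ip_le_hnorm f g : H f -> H g -> complex.Re (ip f g) <= hnorm ip f * hnorm ip g.
Proof.
move=> Hf Hg; set a := complex.Re _; set p := sqnorm f; set q := sqnorm g.
have quad t : 0 <= p + 2 * t * a + t ^+ 2 * q.
  by rewrite -sqnorm_add_scale //; apply/sqnorm_ge0/(rk_add RK Hf)/(rk_scale RK).
have p0 : 0 <= p := sqnorm_ge0 Hf; have q0 : 0 <= q := sqnorm_ge0 Hg.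
have [a0|a0] := lerP a 0; first by rewrite (le_trans a0) ?mulr_ge0 ?sqrtr_ge0.
suff : a ^+ 2 <= p * q.
  by move=> aq; rewrite /hnorm -sqrtrM // -(ger0_norm (ltW a0)) -sqrtr_sqr ler_wsqrtr.
have [q00|q0'] := eqVneq q 0.
  (* a degenerate quadratic [p + 2 t a] is negative for suitable [t] *)
  have := quad (- (p + 1) / (2 * a)); rewrite q00 mulr0 addr0.
  have -> : p + 2 * (- (p + 1) / (2 * a)) * a = -1 by field; rewrite gt_eqF.
  lra.
have qp : 0 < q by rewrite lt_def q0' q0.
have := quad (- a / q).
have -> : p + 2 * (- a / q) * a + (- a / q) ^+ 2 * q = p - a ^+ 2 / q by field.
by rewrite subr_ge0 ler_pdivrMr.
Qed.

Lemma hnormD f g : H f -> H g -> hnorm ip (fadd f g) <= hnorm ip f + hnorm ip g.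
Proof.
move=> Hf Hg; have fg := Re_ip_le_hnorm Hf Hg.
have -> : fadd f g = fadd f (fscale 1%:C g).
  by apply: funext => x; rewrite /fadd /fscale mul1r.
rewrite /hnorm sqnorm_add_scale // expr1n mul1r mulr1.
rewrite -(ger0_norm (addr_ge0 (sqrtr_ge0 _) (sqrtr_ge0 _))) -sqrtr_sqr ler_wsqrtr //.
rewrite sqrrD !sqr_sqrtr ?sqnorm_ge0 //.
rewrite /hnorm in fg; lra.
Qed.

Lemma hnormZ a f : H f -> hnorm ip (fscale a f) = normc a * hnorm ip f.
Proof.
move=> Hf; rewrite /hnorm (rk_ipZ RK _ Hf (rk_scale RK a Hf)) ipZr // (ip_selfE Hf).
case: a => x y /=; rewrite -sqrtrM ?addr_ge0 ?sqr_ge0 //; congr Num.sqrt.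
ring.
Qed.

Lemma rk_sub f g : H f -> H g -> H (fsub f g).
Proof.
move=> Hf Hg; have -> : fsub f g = fadd f (fscale (-1) g).
  by apply: funext => x; rewrite /fsub /fadd /fscale mulN1r.
exact/(rk_add RK Hf)/(rk_scale RK).
Qed.

Lemma hnormB_sym f g : H f -> H g -> hnorm ip (fsub f g) = hnorm ip (fsub g f).
Proof.
move=> Hf Hg; have -> : fsub f g = fscale (-1) (fsub g f).
  by apply: funext => x; rewrite /fsub /fscale mulN1r opprB.
rewrite hnormZ; last exact: rk_sub.
by rewrite /= oppr0 expr0n addr0 sqrrN expr1n sqrtr1 mul1r.
Qed.

Lemma hnorm_le_sub f g : H f -> H g -> hnorm ip f <= hnorm ip g + hnorm ip (fsub f g).
Proof.
move=> Hf Hg; have {1}<- : fadd g (fsub f g) = f.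
  by apply: funext => x; rewrite /fadd /fsub addrC subrK.
exact/hnormD/rk_sub.
Qed.

Lemma hnorm0 : hnorm ip (@fzero R X) = 0.
Proof.
have {1}-> : @fzero R X = fscale 0 (@fzero R X).
  by apply: funext => x; rewrite /fscale mul0r.
rewrite hnormZ; last exact: rk_zero RK.
by rewrite /= expr0n addr0 sqrtr0 mul0r.
Qed.

Lemma hnorm_gt0 f : H f -> f <> @fzero R X -> 0 < hnorm ip f.
Proof.
move=> Hf f0; rewrite sqrtr_gt0 lt_def sqnorm_ge0 // andbT.
by apply/eqP => sq0; apply/f0/(rk_ip_eq0 RK Hf); rewrite ip_selfE // sq0.
Qed.

Lemma hnorm_shift_perturb v w v' u' (z0 z : R[i]) : H v -> H w -> H v' -> H u' ->
  hnorm ip (fsub u' (fscale z v')) <=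
  hnorm ip (fsub w (fscale z0 v)) + hnorm ip (fsub u' w) +
  normc z0 * hnorm ip (fsub v v') + normc (z0 - z) * hnorm ip v'.
Proof.
move=> Hv Hw Hv' Hu'.
have -> : fsub u' (fscale z v') = fadd (fadd (fadd (fsub w (fscale z0 v)) (fsub u' w))
    (fscale z0 (fsub v v'))) (fscale (z0 - z) v').
  by apply: funext => x; rewrite /fadd /fsub /fscale; ring.
have H1 := rk_sub Hw (rk_scale RK z0 Hv); have H2 := rk_sub Hu' Hw.
have H3 := rk_scale RK z0 (rk_sub Hv Hv'); have H4 := rk_scale RK (z0 - z) Hv'.
apply: le_trans (hnormD (rk_add RK (rk_add RK H1 H2) H3) H4) _.
rewrite (hnormZ _ Hv') lerD2r.
apply: le_trans (hnormD (rk_add RK H1 H2) H3) _; rewrite (hnormZ _ (rk_sub Hv Hv')) lerD2r.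
exact: hnormD.
Qed.

Lemma spanN_mono (xs : nat -> X) M n : (M <= n)%N -> spanN kf xs M `<=` spanN kf xs n.
Proof.
move=> Mn _ [c ->]; exists (fun j => if (j < M)%N then c j else 0).
apply: funext => y; rewrite (big_ord_widen n (fun j => c j * kf (xs j) y) Mn).
by rewrite big_mkcond /=; apply: eq_bigr => i _; case: ifP; rewrite ?mul0r.
Qed.

Section KoopmanAdjoint.
Variables (F : X -> X) (xs : nat -> X) (eps : R).

Lemma sigma_inf_on_le_subset S T z : S `<=` T ->
  (sigma_inf_on H ip F T z <= sigma_inf_on H ip F S z)%E.
Proof.
move=> ST; apply: ereal_inf_le_tmp => _ [v [w [Sv v0 adj ->]]].
by exists v, w; split => //; apply: ST.
Qed.

Hypothesis core : is_core_adj H ip F (span_all kf xs).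

Lemma sigma_inf_spanN_lt_near z0 : (sigma_inf_on H ip F setT z0 < eps%:E)%E ->
  exists M r, 0 < r /\ forall n z, (M <= n)%N -> normc (z - z0) < r ->
    (sigma_inf_on H ip F (spanN kf xs n) z < eps%:E)%E.
Proof.
move=> /ereal_inf_lt[_ [v [w [_ v0 adj ->]]]]; rewrite lte_fin => ratio.
have [Hv Hw _] := adj; have nv0 := hnorm_gt0 Hv v0.
rewrite ltr_pdivrMr // in ratio.
have [eta [r [eta0 r0 margin]]] :=
  perturbation_margin (sqrtr_ge0 _) ratio (normc_ge0 z0) nv0.
have [v' [u' [[M spanv'] adj' dv du]]] := core.2 v w adj eta eta0.
have [Hv' Hu' _] := adj'.
exists M, r; split => // n z Mn zr.
have x_bd : 0 <= hnorm ip (fsub v v') < eta by rewrite sqrtr_ge0 hnormB_sym.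
have y_bd : 0 <= hnorm ip (fsub u' w) < eta by rewrite sqrtr_ge0.
have s_bd : 0 <= normc (z0 - z) < r by rewrite normc_ge0 normcB_sym.
have t_bd : hnorm ip v - hnorm ip (fsub v v') <= hnorm ip v' <=
    hnorm ip v + hnorm ip (fsub v v').
  have := hnorm_le_sub Hv Hv'; have := hnorm_le_sub Hv' Hv.
  by rewrite (hnormB_sym Hv' Hv) => h1 h2; apply/andP; split; lra.
have [t0 lt_eps] := margin _ _ _ _ x_bd y_bd s_bd t_bd.
have v'0 : v' <> @fzero R X by move=> v'0; rewrite v'0 hnorm0 ltxx in t0.
apply: le_lt_trans (_ : _ <= (hnorm ip (fsub u' (fscale z v')) / hnorm ip v')%:E)%E _.
  by apply: ereal_inf_lbound; exists v', u'; split => //; exact: spanN_mono spanv'.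
rewrite lte_fin ltr_pdivrMr //.
exact: le_lt_trans (hnorm_shift_perturb _ _ Hv Hw Hv' Hu') lt_eps.
Qed.

Lemma Gamma_adj_sub_Sp_ap_adj N : Gamma_adj H ip kf F xs eps N `<=` Sp_ap_adj H ip F eps.
Proof.
move=> z [_ hz] d d0; exists z; split; last by rewrite subrr normr0 ltcR.
exact: le_lt_trans (sigma_inf_on_le_subset _ (subsetT _)) hz.
Qed.

Lemma Gamma_adj_near z0 : (sigma_inf_on H ip F setT z0 < eps%:E)%E ->
  forall delta, 0 < delta -> exists N, forall n, (N <= n)%N ->
  exists2 w, Gamma_adj H ip kf F xs eps n w & normc (z0 - w) < delta.
Proof.
move=> hz0 delta delta0; have [M [r [r0 near_z0]]] := sigma_inf_spanN_lt_near hz0.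
have [N hN] := exists_nat_gt (2 / r + 2 / delta + normc z0 + 2).
exists (maxn M N) => n; rewrite geq_max => /andP[Mn]; rewrite -(ler_nat R) => Nn.
have r2 : 0 < 2 / r by rewrite divr_gt0.
have delta2 : 0 < 2 / delta by rewrite divr_gt0.
have z0_ge0 := normc_ge0 z0.
have np : 0 < n%:R :> R by lra.
have n0 : (0 < n)%N by rewrite -(ltr0n R).
have z0n : normc z0 + 2 <= n%:R by lra.
have [w gw z0w] := grid_approx n0 z0n.
have wr : 2 / n%:R < r by rewrite ltr_pdivrMr // mulrC -ltr_pdivrMr //; lra.
have wdelta : 2 / n%:R < delta by rewrite ltr_pdivrMr // mulrC -ltr_pdivrMr //; lra.
exists w; last by lra.
by split => //; apply: near_z0 => //; rewrite normcB_sym; lra.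
Qed.

Lemma Sp_ap_adj_cell p rho : 0 < rho -> exists N, forall n, (N <= n)%N ->
  forall z, Sp_ap_adj H ip F eps z -> normc (z - p) <= rho ->
  exists2 w, Gamma_adj H ip kf F xs eps n w & normc (z - w) < 4 * rho.
Proof.
move=> rho0.
have [[z0 [hz0 z0p]]|far] := pselect (exists z0,
  (sigma_inf_on H ip F setT z0 < eps%:E)%E /\ normc (z0 - p) < 2 * rho).
  have [N hN] := Gamma_adj_near hz0 rho0.
  exists N => n /hN[w gw z0w] z _ zp; exists w => //.
  have := normcB_triangle z p w; have := normcB_triangle p z0 w.
  rewrite (normcB_sym p z0); lra.
(* otherwise no point of the pseudospectrum lies within [rho] of [p] *)
exists 0%N => n _ z /(_ rho rho0)[z0 [hz0 zz0]] zp; exfalso; apply: far.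
exists z0; split => //; rewrite normr_normc ltcR in zz0.
by have := normcB_triangle z0 z p; rewrite (normcB_sym z0 z); lra.
Qed.

Lemma Gamma_adj_AW_converges :
  AW_converges (Gamma_adj H ip kf F xs eps) (Sp_ap_adj H ip F eps).
Proof.
move=> d m d0.
have [K hK] := exists_nat_gt (8 / d).
have Kp : 0 < K%:R :> R by apply: lt_trans hK; rewrite divr_gt0.
have rho0 : 0 < 2 / K%:R :> R by rewrite divr_gt0.
have rho_d : 4 * (2 / K%:R) <= d.
  by rewrite mulrA ler_pdivrMr // -ler_pdivrMl //; lra.
pose L := (K * m + 1)%N.
have [N cells] : exists N, forall a b, `|a| <= L%:Z -> `|b| <= L%:Z ->
    forall n, (N <= n)%N -> forall z, Sp_ap_adj H ip F eps z ->
    normc (z - ((a%:~R / K%:R) +i* (b%:~R / K%:R))) <= 2 / K%:R ->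
    exists2 w, Gamma_adj H ip kf F xs eps n w & normc (z - w) < 4 * (2 / K%:R).
  by apply: eventually_forall_int_box => a b _ _; exact: Sp_ap_adj_cell.
exists N => n Nn; split.
  move=> z hz _; exists z; split; first exact: Gamma_adj_sub_Sp_ap_adj hz.
  by rewrite subrr normr0 lecR ltW.
move=> z hz; rewrite normr_normc -(rmorph_nat (real_complex R)) lecR => zm.
have K0 : (0 < K)%N by rewrite -(ltr0n R).
have [a [b [ha hb zab]]] := lattice_approx z K0.
have box c : `|c%:~R| <= K%:R * normc z + 1 :> R -> `|c| <= L%:Z.
  move=> hc; rewrite -(ler_int R) intr_norm; apply: le_trans hc _.
  by rewrite -[L%:~R]/(L%:R) /L natrD natrM lerD2r ler_pM2l.
have [w gw zw] := cells a b (box _ ha) (box _ hb) n Nn z hz zab.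
by exists w; split => //; rewrite normr_normc lecR; lra.
Qed.

End KoopmanAdjoint.

End InnerProductSpace.

Theorem mainTheorem3 (R : realType) (X : Type) (H : set (X -> R[i]))
  (ip : (X -> R[i]) -> (X -> R[i]) -> R[i]) (kf : X -> X -> R[i])
  (F : X -> X) (xs : nat -> X) (eps : R) :
  is_RKHS H ip kf ->
  densely_defined H ip (koopman_dom H F) ->
  is_core_adj H ip F (span_all kf xs) ->
  0 < eps ->
  (forall N : nat, Gamma_adj H ip kf F xs eps N `<=` Sp_ap_adj H ip F eps) /\
  AW_converges (Gamma_adj H ip kf F xs eps) (Sp_ap_adj H ip F eps).
Proof.
(* K^* enters only through the graph relation koopman_adj. *)
move=> RK _ core _; split; first exact: Gamma_adj_sub_Sp_ap_adj.
exact: Gamma_adj_AW_converges.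
Qed.
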